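(* For $\mathbf{x}\in\mathcal{B}^\Sigma_{e,n}$, $\mathbf{y}\in\mathcal{B}^\Sigma_{d,m}$ and $\mathbf{v}\in\mathcal{B}^\Sigma_{d,n}$, we have $\Delta(\mathbf{y}\cdot\mathbf{v})=\Delta(\mathbf{y})\cdot\Delta(\mathbf{v})$ and $\Delta(\mathbf{x}*\mathbf{v})=\Delta(\mathbf{x})*\Delta(\mathbf{v})$.
   Context: Let $\mathbf{k}$ be a field of characteristic $0$ and $B=\bigoplus_{d\ge0}B_d$ a commutative graded $\mathbf{k}$-algebra with $B_0=\mathbf{k}$, generated by $B_1$, $\dim B_1<\infty$. Let $\mathcal{B}^\Sigma=\bigoplus_{n,d}\mathcal{B}^\Sigma_{d,n}$ with $\mathcal{B}^\Sigma_{d,n}=(B_d^{\otimes n})^{\Sigma_n}$ ($\Sigma_n$ permuting factors). Product $\cdot$: for $f\in\mathcal{B}^\Sigma_{d,n}$, $g\in\mathcal{B}^\Sigma_{d,m}$, $f\cdot g=\sum_\sigma f\cdot_\sigma g$ where $\sigma$ runs over subsets $\{i_1<\cdots<i_n\}\subseteq[n+m]$ and $f\cdot_\sigma g$ places the factors of $f$ in positions $i_1,\dots,i_n$ and those of $g$ in the complementary positions in order (zero between different $d$). Product $*:\mathcal{B}^\Sigma_{d,n}\otimes\mathcal{B}^\Sigma_{e,n}\to\mathcal{B}^\Sigma_{d+e,n}$ is factorwise multiplication $(u_1\otimes\cdots\otimes u_n)*(v_1\otimes\cdots\otimes v_n)=u_1v_1\otimes\cdots\otimes u_nv_n$ (zero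 for different $n$). For fixed $d$, $\bigoplus_n\mathcal{B}^\Sigma_{d,n}$ is a free divided power algebra under $\cdot$ generated by $\mathcal{B}^\Sigma_{d,1}=B_d$; $\Delta:\mathcal{B}^\Sigma\to\mathcal{B}^\Sigma\otimes\mathcal{B}^\Sigma$ is the unique $\cdot$-algebra homomorphism with $\Delta(w)=1\otimes w+w\otimes1$ for $w\in\mathcal{B}^\Sigma_{d,1}$ (all $d$). The products $\cdot$ and $*$ are extended to $\mathcal{B}^\Sigma\otimes\mathcal{B}^\Sigma$ componentwise: $(a\otimes b)\cdot(c\otimes e)=(a\cdot c)\otimes(b\cdot e)$ and $(a\otimes b)*(c\otimes e)=(a*c)\otimes(b*e)$. *)

From HB Require Import structures.
From mathcomp Require Import all_boot all_order all_algebra.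
Set Implicit Arguments. Unset Strict Implicit. Unset Printing Implicit Defensive.
Import Order.TTheory GRing.Theory.
Local Open Scope ring_scope.

(* The graded algebra B, presented by homogeneous bases and structure        *)
(* constants: B_d has basis indexed by 'I_(gdim d) (each B_d is finite-      *)
(* dimensional since B is generated by the finite-dimensional B_1), and      *)
(* b_i * b_j = \sum_l gmul d e i j l b_l  for b_i in B_d, b_j in B_e.        *)
(* An element of B_d is its coordinate function 'I_(gdim d) -> k.           *)
Record gradedAlg (k : fieldType) := GradedAlg {
  gdim : nat -> nat;
  gmul : forall d e, 'I_(gdim d) -> 'I_(gdim e) -> 'I_(gdim (d + e)%N) -> k
}.

Section GradedAlgDefs.
Variables (k : fieldType) (B : gradedAlg k).

Local Notation I d := ('I_(gdim B d)).

Definition gmulv d e (u : I d -> k) (v : I e -> k) : I (d + e)%N -> k :=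
  fun l => \sum_(i : I d) \sum_(j : I e) u i * v j * @gmul _ B _ _ i j l.

Definition std_graded : Prop :=
  [/\
      (forall d e f (u : I d -> k) (v : I e -> k) (w : I f -> k) (l : I (d + e + f)%N),
          gmulv (gmulv u v) w l
          = gmulv u (gmulv v w) (cast_ord (congr1 (gdim B) (esym (addnA d e f))) l)),
      (forall d e (u : I d -> k) (v : I e -> k) (l : I (d + e)%N),
          gmulv u v l = gmulv v u (cast_ord (congr1 (gdim B) (addnC d e)) l)),
      gdim B 0%N = 1%N /\
      (exists one : I 0%N -> k, forall e (v : I e -> k) (l : I e), gmulv one v l = v l)
    & (forall d (z : I d.+1 -> k), exists a : I 1%N -> I d -> k,
          forall l : I d.+1, z l = \sum_(i : I 1%N) \sum_(j : I d) a i j * @gmul _ B _ _ i j l)].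

(* Tensor algebra over B_d in coordinates: an element of                    *)
(* \bigoplus_n B_d^{\otimes n} is a finitely supported function on words     *)
(* (sequences of basis indices of B_d); the word w of length n is the       *)
(* coordinate of b_(w_1) (x) ... (x) b_(w_n).  Elements of B_d^{(x) n} are    *)
(* those supported on words of length n, and Sigma_n-invariance means       *)
(* invariance under permutations of the word.                               *)
Definition word d := seq (I d).
Definition sfun d := word d -> k.
Definition sfun2 d := word d -> word d -> k.  (* element of the tensor square *)

Definition finsupp d (x : sfun d) : Prop :=
  exists N : nat, forall w : word d, (N <= size w)%N -> x w = 0.
Definition symm d (x : sfun d) : Prop :=
  forall w w' : word d, perm_eq w w' -> x w = x w'.

Definition inBS d (x : sfun d) : Prop := finsupp x /\ symm x.
Definition inBSn d (n : nat) (x : sfun d) : Prop :=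
  symm x /\ forall w : word d, size w != n -> x w = 0.

Definition finsupp2 d (X : sfun2 d) : Prop :=
  exists N : nat, forall w1 w2 : word d, (N <= size w1 + size w2)%N -> X w1 w2 = 0.
Definition symm2 d (X : sfun2 d) : Prop :=
  forall w1 w1' w2 w2' : word d, perm_eq w1 w1' -> perm_eq w2 w2' ->
    X w1 w2 = X w1' w2'.
Definition inBS2 d (X : sfun2 d) : Prop := finsupp2 X /\ symm2 X.

Definition pos_mask N (S : {set 'I_N}) : bitseq := [seq i \in S | i <- enum 'I_N].

(* the product "." : sum over subsets S of positions; x gets the positions
   in S (in increasing order), y the complementary positions *)
Definition dotp d (x y : sfun d) : sfun d :=
  fun w => \sum_(S : {set 'I_(size w)})
             x (mask (pos_mask S) w) * y (mask (pos_mask (~: S)) w).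

Definition dotp2 d (X Y : sfun2 d) : sfun2 d :=
  fun w1 w2 => \sum_(S1 : {set 'I_(size w1)}) \sum_(S2 : {set 'I_(size w2)})
     X (mask (pos_mask S1) w1) (mask (pos_mask S2) w2)
     * Y (mask (pos_mask (~: S1)) w1) (mask (pos_mask (~: S2)) w2).

(* coordinate of (b_(u_1) b_(v_1)) (x) ... (x) (b_(u_n) b_(v_n)) on the word w *)
Definition coefprod e d (u : word e) (v : word d) (w : word (e + d)%N) : k :=
  \prod_(t <- zip (zip u v) w) @gmul _ B _ _ t.1.1 t.1.2 t.2.

(* the product "*" : factorwise multiplication (zero for different lengths) *)
Definition star e d (x : sfun e) (v : sfun d) : sfun (e + d)%N :=
  fun w => \sum_(u : (size w).-tuple (I e)) \sum_(u' : (size w).-tuple (I d))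
             x u * v u' * coefprod u u' w.

Definition star2 e d (X : sfun2 e) (Y : sfun2 d) : sfun2 (e + d)%N :=
  fun w1 w2 =>
    \sum_(u1 : (size w1).-tuple (I e)) \sum_(u1' : (size w1).-tuple (I d))
    \sum_(u2 : (size w2).-tuple (I e)) \sum_(u2' : (size w2).-tuple (I d))
      X u1 u2 * Y u1' u2' * coefprod u1 u1' w1 * coefprod u2 u2' w2.

Definition one d : sfun d := fun w => (w == [::])%:R.
Definition tens d (x y : sfun d) : sfun2 d := fun w1 w2 => x w1 * y w2.

(* These
   properties determine Delta uniquely (char 0, free divided power algebra). *)
Definition is_Delta (D : forall d, sfun d -> sfun2 d) : Prop :=
  forall d,
  [/\ (forall x : sfun d, inBS x -> inBS2 (D d x)),
      (forall (a : k) (x y : sfun d), inBS x -> inBS y ->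
         forall w1 w2, D d (fun w => a * x w + y w) w1 w2
                       = a * D d x w1 w2 + D d y w1 w2),
      (forall x y : sfun d, inBS x -> inBS y ->
         forall w1 w2, D d (dotp x y) w1 w2 = dotp2 (D d x) (D d y) w1 w2),
      (forall w1 w2, D d (@one d) w1 w2 = tens (@one d) (@one d) w1 w2)
    & (forall x : sfun d, inBSn 1%N x ->
         forall w1 w2, D d x w1 w2 = tens (@one d) x w1 w2 + tens x (@one d) w1 w2)].

End GradedAlgDefs.

(* In characteristic 0 the axioms of [is_Delta] force Delta to be the
   deconcatenation coproduct: for x in B^Sigma_{d,n}, the coefficient of
   w1 (x) w2 in Delta x is x (w1 ++ w2).  Indeed a letter b_a acts on symmetric
   tensors by (b_a . z) w = #_a(w) z (w minus one a), so a symmetric x of length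
   n+1 equals (n+1)^-1 sum_a b_a . x_a with x_a u = x (a :: u).  Since Delta is
   multiplicative, b_a is primitive and deconcatenation is compatible with left
   multiplication by a primitive letter, induction on n concludes.  The claim
   for "." is then an axiom of Delta, and the claim for "*" holds because the
   coefficient of a factorwise product is multiplicative under concatenation. *)

From Pilot Require Import Defs.
From mathcomp Require Import all_boot all_order all_algebra.
From mathcomp Require Import perm.
From Stdlib Require Import FunctionalExtensionality.
Set Implicit Arguments. Unset Strict Implicit. Unset Printing Implicit Defensive.
Import GRing.Theory.
Local Open Scope ring_scope.

Section PositionMasks.
Variable T : eqType.
Implicit Types (w : seq T).

Lemma mask_pos_mask w (S : {set 'I_(size w)}) :
  mask (pos_mask S) w = [seq tnth (in_tuple w) i | i <- enum S].
Proof.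
have Ew : w = map (tnth (in_tuple w)) (enum 'I_(size w)) by rewrite map_tnth_enum.
by rewrite /pos_mask [X in mask _ X]Ew -map_mask -filter_mask enumT.
Qed.

Lemma size_mask_pos_mask w (S : {set 'I_(size w)}) :
  size (mask (pos_mask S) w) = #|S|.
Proof. by rewrite mask_pos_mask size_map cardE. Qed.

Lemma mask_pos_mask1 w (i : 'I_(size w)) :
  mask (pos_mask [set i]) w = [:: tnth (in_tuple w) i].
Proof. by rewrite mask_pos_mask enum_set1. Qed.

Lemma mask_pos_maskC0 w : mask (pos_mask (~: (set0 : {set 'I_(size w)}))) w = w.
Proof. by rewrite mask_pos_mask setC0 enum_setT -enumT map_tnth_enum. Qed.

Lemma perm_mask_pos_maskC w (S : {set 'I_(size w)}) :
  perm_eq w (mask (pos_mask S) w ++ mask (pos_mask (~: S)) w).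
Proof.
have Ew : w = map (tnth (in_tuple w)) (enum 'I_(size w)) by rewrite map_tnth_enum.
rewrite !mask_pos_mask -map_cat [X in perm_eq X _]Ew; apply: perm_map.
have -> : enum (~: S) = filter (predC (mem S)) (enum 'I_(size w)).
  by rewrite enumT; apply: eq_filter => i; rewrite /= in_setC.
by rewrite perm_sym enumT perm_filterC.
Qed.

End PositionMasks.

Lemma sum_card1 (R : nmodType) (T : finType) (F : {set T} -> R) :
  (forall S : {set T}, #|S| != 1%N -> F S = 0) ->
  \sum_(S : {set T}) F S = \sum_(x : T) F [set x].
Proof.
move=> F0; rewrite (bigID (fun S : {set T} => #|S| == 1%N)) /= [X in _ + X]big1 ?addr0 //.
rewrite -(big_imset F (in2W set1_inj)) /=; apply: eq_bigl => S.
by apply/cards1P/imsetP => [[x ->]|[x _ ->]]; exists x.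
Qed.

Lemma sum_count_mem (T : finType) (s : seq T) : (\sum_(a : T) count_mem a s)%N = size s.
Proof.
rewrite -sum1_size [RHS](partition_big id predT) //=; apply: eq_bigr => a _.
by rewrite sum1_count.
Qed.

Lemma sum_tnth_eq (R : pzSemiRingType) (T : eqType) (s : seq T) (a : T) :
  \sum_(i < size s) (tnth (in_tuple s) i == a)%:R = (count_mem a s)%:R :> R.
Proof.
rewrite -(big_tnth _ _ _ xpredT (fun x => (x == a)%:R)) -sum1_count natr_sum [RHS]big_mkcond.
by apply: eq_bigr => x _; rewrite /=; case: eqP.
Qed.

Section SymmetricTensors.
Variables (k : fieldType) (B : gradedAlg k) (d : nat).
Local Notation I := ('I_(gdim B d)).
Local Notation word := (word B d).
Local Notation sfun := (sfun B d).
Local Notation one := (@Defs.one k B d).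

Lemma inBSn_inBS n (x : sfun) : inBSn n x -> inBS x.
Proof.
case=> Hs Hx; split=> //; exists n.+1 => w Hw; apply: Hx.
by rewrite neq_ltn Hw orbT.
Qed.

Lemma inBS0 : inBS (fun _ : word => 0 : k).
Proof. by split=> //; exists 0%N. Qed.

Lemma inBS_one : inBS one.
Proof.
split; first by exists 1%N => -[].
by move=> w w' Hp; rewrite /one -!size_eq0 (perm_size Hp).
Qed.

Lemma inBS_sum (J : Type) (s : seq J) (c : J -> k) (f : J -> sfun) :
  (forall j, inBS (f j)) -> inBS (fun w => \sum_(j <- s) c j * f j w).
Proof.
move=> Hf; split; last first.
  by move=> w w' Hp; apply: eq_bigr => j _; case: (Hf j) => _ Hs; rewrite (Hs _ _ Hp).
elim: s => [|j s [N HN]]; first by exists 0%N => w _; rewrite big_nil.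
have [[M HM] _] := Hf j; exists (maxn N M) => w; rewrite geq_max => /andP[wN wM].
by rewrite big_cons HN ?HM ?mulr0 ?addr0.
Qed.

Lemma inBSn_cons n (x : sfun) (a : I) : inBSn n.+1 x -> inBSn n (fun u => x (a :: u)).
Proof.
by case=> Hs Hx; split=> [u u' Hu|u Hu]; [apply: Hs; rewrite perm_cons | apply: Hx].
Qed.

Lemma symm_rem (z : sfun) (a : I) (u w : word) : symm z ->
  perm_eq (a :: u) w -> z u = z (rem a w).
Proof.
move=> Hz Hp; have Haw : a \in w by rewrite -(perm_mem Hp) mem_head.
by apply: Hz; rewrite -(perm_cons a) (perm_trans Hp) // perm_to_rem.
Qed.

Definition letter (a : I) : sfun := fun w => (w == [:: a])%:R.

Lemma inBSn_letter (a : I) : inBSn 1 (letter a).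
Proof.
split=> [w w' Hp|w]; rewrite /letter.
  suff -> : (w == [:: a]) = (w' == [:: a]) by [].
  apply/idP/idP => /eqP E; apply/eqP; [rewrite E perm_sym in Hp | rewrite E in Hp].
    exact: perm_small_eq Hp.
  exact: perm_small_eq Hp.
by move=> Hw; case: eqP => // E; rewrite E in Hw.
Qed.

Lemma dotp_letterE (z : sfun) (a : I) (w : word) : symm z ->
  dotp (letter a) z w = (count_mem a w)%:R * z (rem a w).
Proof.
move=> Hz; rewrite /dotp sum_card1 => [|S]; last first.
  move=> HS; rewrite /letter; case: eqP => [Hm|_]; last exact: mul0r.
  by move: HS; rewrite -(size_mask_pos_mask S) Hm.
rewrite -(sum_tnth_eq k w a) mulr_suml; apply: eq_bigr => i _.
rewrite mask_pos_mask1 /letter eqseq_cons andbT.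
case: eqP => [ai|]; last by rewrite !mul0r.
have := perm_mask_pos_maskC [set i]; rewrite mask_pos_mask1 ai perm_sym => Hw.
by rewrite (symm_rem Hz Hw).
Qed.

Lemma inBSn_dotp_letter n (z : sfun) (a : I) : inBSn n z -> inBSn n.+1 (dotp (letter a) z).
Proof.
case=> Hs Hz; split=> [w w' Hp|w Hw]; rewrite !dotp_letterE //.
  have [a_w|a_w] := boolP (a \in w); last first.
    by rewrite (count_memPn a_w) (count_memPn _) ?mul0r // -(perm_mem Hp).
  rewrite (seq.permP Hp); congr (_ * _); apply: symm_rem => //.
  by rewrite (perm_trans _ Hp) // perm_sym perm_to_rem.
have [a_w|a_w] := boolP (a \in w); last by rewrite (count_memPn a_w) mul0r.
rewrite Hz ?mulr0 // size_rem //.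
by move: Hw; apply: contra => /eqP <-; case: (w) a_w.
Qed.

Lemma letter_expansion n (x : sfun) : [pchar k] =i pred0 -> inBSn n.+1 x ->
  forall w, x w = \sum_(a : I) (n.+1)%:R^-1 * dotp (letter a) (fun u => x (a :: u)) w.
Proof.
move=> char0 [Hs Hx] w.
have Exa (a : I) : dotp (letter a) (fun u => x (a :: u)) w = (count_mem a w)%:R * x w.
  rewrite dotp_letterE => [|u u' Hu]; last by apply: Hs; rewrite perm_cons.
  have [a_w|a_w] := boolP (a \in w); last by rewrite (count_memPn a_w) !mul0r.
  by congr (_ * _); apply: Hs; rewrite perm_sym perm_to_rem.
under eq_bigr => a _ do rewrite Exa.
rewrite -mulr_sumr -mulr_suml -natr_sum sum_count_mem.
have [->|nw] := eqVneq (size w) n.+1; last by rewrite Hx // !mulr0.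
by rewrite mulrA mulVf ?mul1r //; move/pcharf0P: char0 => ->.
Qed.

Lemma sum_one_mask (w : word) (G : {set 'I_(size w)} -> k) :
  \sum_(S : {set 'I_(size w)}) one (mask (pos_mask S) w) * G S = G set0.
Proof.
rewrite (bigD1 set0) //= big1 ?addr0 => [|S nzS].
  by rewrite /one mask_pos_mask enum_set0 eqxx mul1r.
by rewrite /one -size_eq0 size_mask_pos_mask cards_eq0 (negbTE nzS) mul0r.
Qed.

Definition deconcat (z : sfun) : sfun2 B d := fun w1 w2 => z (w1 ++ w2).

Lemma dotp2Dl (X Y Z : sfun2 B d) (w1 w2 : word) :
  dotp2 (fun u1 u2 => X u1 u2 + Y u1 u2) Z w1 w2 = dotp2 X Z w1 w2 + dotp2 Y Z w1 w2.
Proof.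
rewrite /dotp2 -big_split; apply: eq_bigr => S1 _.
by rewrite -big_split; apply: eq_bigr => S2 _; rewrite mulrDl.
Qed.

Lemma dotp2_one_tens (x : sfun) (Z : sfun2 B d) (w1 w2 : word) :
  dotp2 (tens one x) Z w1 w2 = dotp x (Z w1) w2.
Proof.
rewrite /dotp2 /tens.
have := @sum_one_mask w1 (fun S1 => dotp x (Z (mask (pos_mask (~: S1)) w1)) w2).
rewrite /= mask_pos_maskC0 => <-; apply: eq_bigr => S1 _.
by rewrite mulr_sumr; apply: eq_bigr => S2 _; rewrite mulrA.
Qed.

Lemma dotp2_tens_one (x : sfun) (Z : sfun2 B d) (w1 w2 : word) :
  dotp2 (tens x one) Z w1 w2 = dotp x (Z^~ w2) w1.
Proof.
rewrite /dotp2 /tens exchange_big /=.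
have := @sum_one_mask w2 (fun S2 => dotp x (Z^~ (mask (pos_mask (~: S2)) w2)) w1).
rewrite /= mask_pos_maskC0 => <-; apply: eq_bigr => S2 _.
by rewrite mulr_sumr; apply: eq_bigr => S1 _; rewrite mulrCA mulrA.
Qed.

Definition primitive_tens (a : I) : sfun2 B d :=
  fun w1 w2 => tens one (letter a) w1 w2 + tens (letter a) one w1 w2.

Lemma dotp2_primitive_deconcat (z : sfun) (a : I) (w1 w2 : word) : symm z ->
  dotp2 (primitive_tens a) (deconcat z) w1 w2 = dotp (letter a) z (w1 ++ w2).
Proof.
move=> Hz; rewrite dotp2Dl dotp2_one_tens dotp2_tens_one /deconcat.
have Hz1 : symm (fun u => z (w1 ++ u)) by move=> u u' Hu; apply: Hz; rewrite perm_cat2l.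
have Hz2 : symm (fun u => z (u ++ w2)) by move=> u u' Hu; apply: Hz; rewrite perm_cat2r.
rewrite !dotp_letterE //.
rewrite count_cat natrD mulrDl addrC; congr (_ + _).
  have [a_w1|a_w1] := boolP (a \in w1); last by rewrite (count_memPn a_w1) !mul0r.
  congr (_ * _); apply: symm_rem => //.
  by rewrite -cat_cons perm_cat2r perm_sym perm_to_rem.
have [a_w2|a_w2] := boolP (a \in w2); last by rewrite (count_memPn a_w2) !mul0r.
congr (_ * _); apply: symm_rem => //.
by rewrite -cat1s perm_catCA perm_cat2l perm_sym perm_to_rem.
Qed.

End SymmetricTensors.

Arguments inBS0 {k B d}.

Section Deconcatenation.
Variables (k : fieldType) (B : gradedAlg k) (D : forall d, sfun B d -> sfun2 B d).
Hypothesis HD : is_Delta D.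
Variable d : nat.
Local Notation I := ('I_(gdim B d)).
Local Notation sfun := (sfun B d).
Local Notation one := (@Defs.one k B d).
Local Notation Delta := (@D d).

Lemma Delta_lin (a : k) (x y : sfun) : inBS x -> inBS y ->
  Delta (fun w => a * x w + y w) = fun w1 w2 => a * Delta x w1 w2 + Delta y w1 w2.
Proof.
by case: (HD d) => _ Dlin _ _ _ Hx Hy; do 2 apply: functional_extensionality => ?; apply: Dlin.
Qed.

Lemma Delta0 : Delta (fun _ => 0) = fun _ _ => 0.
Proof.
have := Delta_lin 1 inBS0 inBS0.
have -> : (fun _ : word B d => 1 * 0 + 0 : k) = (fun _ => 0).
  by apply: functional_extensionality => ?; rewrite mulr0 addr0.
move=> D00; do 2 apply: functional_extensionality => ?.
have /= E := congr1 (fun F => F _ _) D00.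
by apply: (addrI (Delta (fun _ => 0) _ _)); rewrite addr0 [RHS]E mul1r.
Qed.

Lemma Delta_scale (c : k) (x : sfun) : inBS x ->
  Delta (fun w => c * x w) = fun w1 w2 => c * Delta x w1 w2.
Proof.
move=> Hx; have := Delta_lin c Hx inBS0; rewrite Delta0.
have -> : (fun w => c * x w + 0) = (fun w => c * x w).
  by apply: functional_extensionality => ?; rewrite addr0.
by move=> ->; do 2 apply: functional_extensionality => ?; rewrite addr0.
Qed.

Lemma Delta_sum (J : Type) (s : seq J) (c : J -> k) (f : J -> sfun) :
  (forall j, inBS (f j)) ->
  Delta (fun w => \sum_(j <- s) c j * f j w)
  = fun w1 w2 => \sum_(j <- s) c j * Delta (f j) w1 w2.
Proof.
move=> Hf; elim: s => [|j s IH].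
  have -> : (fun w => \sum_(j <- [::]) c j * f j w) = fun _ => 0.
    by apply: functional_extensionality => ?; rewrite big_nil.
  by rewrite Delta0; do 2 apply: functional_extensionality => ?; rewrite big_nil.
have -> : (fun w => \sum_(i <- j :: s) c i * f i w)
    = fun w => c j * f j w + \sum_(i <- s) c i * f i w.
  by apply: functional_extensionality => ?; rewrite big_cons.
rewrite Delta_lin ?IH //; last exact: inBS_sum.
by do 2 apply: functional_extensionality => ?; rewrite big_cons.
Qed.

Lemma Delta_deconcat n (x : sfun) : [pchar k] =i pred0 -> inBSn n x -> Delta x = deconcat x.
Proof.
move=> char0; case: (HD d) => _ _ Dmul Done Dprim.
elim: n x => [|n IH] x Hx.
  have -> : x = fun w => x [::] * one w.
    apply: functional_extensionality => -[|a w]; first by rewrite mulr1.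
    by rewrite mulr0; case: Hx => _ ->.
  rewrite Delta_scale; last exact: inBS_one.
  apply: functional_extensionality => w1; apply: functional_extensionality => w2.
  rewrite Done /tens /deconcat /one.
  by case: w1 => [|? ?]; case: w2 => [|? ?]; rewrite ?mulr1 ?mulr0.
have Hxa (a : I) := inBSn_cons a Hx.
have -> : x = fun w =>
    \sum_(a <- index_enum I) (n.+1)%:R^-1 * dotp (letter a) (fun u => x (a :: u)) w.
  by apply: functional_extensionality; apply: letter_expansion.
rewrite Delta_sum => [|a]; last exact/(inBSn_inBS (inBSn_dotp_letter a (Hxa a))).
apply: functional_extensionality => w1; apply: functional_extensionality => w2.
apply: eq_bigr => a _; congr (_ * _).
rewrite Dmul; [|exact: inBSn_inBS (inBSn_letter a)|exact: inBSn_inBS (Hxa a)].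
have -> : Delta (letter a) = primitive_tens a.
  by do 2 apply: functional_extensionality => ?; apply: Dprim; apply: inBSn_letter.
by rewrite IH //; apply: dotp2_primitive_deconcat; case: (Hxa a).
Qed.

End Deconcatenation.

Lemma sum_tuple_cat (R : nmodType) (T : finType) n1 n2 (F : seq T -> R) :
  \sum_(u : (n1 + n2).-tuple T) F u
  = \sum_(u1 : n1.-tuple T) \sum_(u2 : n2.-tuple T) F (u1 ++ u2).
Proof.
have take_tupleP (u : (n1 + n2).-tuple T) : size (take n1 u) == n1.
  by rewrite size_takel // size_tuple leq_addr.
have drop_tupleP (u : (n1 + n2).-tuple T) : size (drop n1 u) == n2.
  by rewrite size_drop size_tuple addKn.
rewrite pair_big (reindex (fun p : n1.-tuple T * n2.-tuple T => cat_tuple p.1 p.2)) //=.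
exists (fun u => (Tuple (take_tupleP u), Tuple (drop_tupleP u))) => [[u1 u2] _|u _].
  by congr (_, _); apply: val_inj; rewrite /= ?take_size_cat ?drop_size_cat ?size_tuple.
by apply: val_inj; rewrite /= cat_take_drop.
Qed.

Section Star.
Variables (k : fieldType) (B : gradedAlg k) (e d : nat).
Local Notation I d := ('I_(gdim B d)).

Lemma coefprod_cat (u1 u2 : word B e) (u1' u2' : word B d) (w1 w2 : word B (e + d)) :
  size u1 = size w1 -> size u1' = size w1 ->
  coefprod (u1 ++ u2) (u1' ++ u2') (w1 ++ w2) = coefprod u1 u1' w1 * coefprod u2 u2' w2.
Proof.
move=> Hu Hu'; rewrite /coefprod zip_cat ?Hu ?Hu' // zip_cat ?big_cat //.
by rewrite size_zip Hu Hu' minnn.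
Qed.

Lemma coefprod_tnth N (u : N.-tuple (I e)) (u' : N.-tuple (I d)) (t : N.-tuple (I (e + d))) :
  coefprod u u' t = \prod_(i < N) gmul (tnth u i) (tnth u' i) (tnth t i).
Proof.
case: N u u' t => [|N] u u' t.
  by rewrite big_ord0 /coefprod (tuple0 u) (tuple0 u') (tuple0 t) /= big_nil.
rewrite /coefprod (big_nth ((tnth u ord0, tnth u' ord0), tnth t ord0)).
rewrite !size_zip !size_tuple !minnn big_mkord; apply: eq_bigr => i _.
by rewrite nth_zip ?size_zip ?size_tuple ?minnn // nth_zip ?size_tuple //= -!tnth_nth.
Qed.

(* [star] sums over (size w)-tuples; fixing the length N lets a word and its
   permutations share the same index type. *)
Definition star_at N (x : sfun B e) (v : sfun B d) (w : word B (e + d)) : k :=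
  \sum_(u : N.-tuple (I e)) \sum_(u' : N.-tuple (I d)) x u * v u' * coefprod u u' w.

Lemma star_at_perm N (x : sfun B e) (v : sfun B d) (t : N.-tuple (I (e + d))) (p : 'S_N) :
  symm x -> symm v -> star_at N x v [tuple tnth t (p i) | i < N] = star_at N x v t.
Proof.
move=> Hx Hv; pose pt T (u : N.-tuple T) := [tuple tnth u (p i) | i < N].
have pt_inj T : injective (pt T).
  move=> u1 u2 E; apply: eq_from_tnth => j.
  by have := congr1 (fun u => tnth u (p^-1 j)%g) E; rewrite /= !tnth_mktuple permKV.
have pt_perm (T : eqType) (u : N.-tuple T) : perm_eq (pt T u) u by apply/tuple_permP; exists p.
rewrite /star_at [LHS](reindex_inj (pt_inj _)); apply: eq_bigr => u _.
rewrite [LHS](reindex_inj (pt_inj _)); apply: eq_bigr => u' _ /=.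
have -> : coefprod (pt _ u) (pt _ u') (pt _ t) = coefprod u u' t.
  rewrite !coefprod_tnth [RHS](reindex_inj (@perm_inj _ p)); apply: eq_bigr => i _.
  by rewrite !tnth_mktuple.
by rewrite (Hx _ _ (pt_perm _ u)) (Hv _ _ (pt_perm _ u')).
Qed.

Lemma star_symm (x : sfun B e) (v : sfun B d) : symm x -> symm v -> symm (star x v).
Proof.
move=> Hx Hv w w' Hp.
have Hs : size w' == size w by rewrite (perm_size Hp).
have /tuple_permP[p Ew'] : perm_eq (Tuple Hs) (in_tuple w) by rewrite perm_sym.
rewrite -[star x v w]/(star_at _ x v w) -[star x v w']/(star_at _ x v w') -(perm_size Hp).
have -> : star_at (size w) x v w' = star_at (size w) x v (Tuple Hs) by [].
by rewrite Ew' star_at_perm.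
Qed.

Lemma star_inBSn n (x : sfun B e) (v : sfun B d) :
  inBSn n x -> inBSn n v -> inBSn n (star x v).
Proof.
case=> Hx Hx0 [Hv _]; split=> [|w Hw]; first exact: star_symm.
by rewrite /star big1 // => u _; rewrite big1 // => u' _; rewrite Hx0 ?mul0r ?size_tuple.
Qed.

Lemma deconcat_star (x : sfun B e) (v : sfun B d) (w1 w2 : word B (e + d)) :
  deconcat (star x v) w1 w2 = star2 (deconcat x) (deconcat v) w1 w2.
Proof.
rewrite /deconcat /star /star2 size_cat.
rewrite (sum_tuple_cat _ _ (fun u =>
  \sum_(u' : (size w1 + size w2).-tuple (I d)) x u * v u' * coefprod u u' (w1 ++ w2))).
apply: eq_bigr => u1 _; rewrite [RHS]exchange_big; apply: eq_bigr => u2 _.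
rewrite (sum_tuple_cat _ _ (fun u' =>
  x (u1 ++ u2) * v u' * coefprod (u1 ++ u2) u' (w1 ++ w2))).
apply: eq_bigr => u1' _; apply: eq_bigr => u2' _.
by rewrite coefprod_cat ?size_tuple // !mulrA.
Qed.

End Star.

Theorem lemma3p4 (k : fieldType) (char0 : [pchar k] =i pred0)
  (B : gradedAlg k) (HB : std_graded B)
  (D : forall d, sfun B d -> sfun2 B d) (HD : is_Delta D)
  (e d n m : nat) (x : sfun B e) (y v : sfun B d) :
  inBSn n x -> inBSn m y -> inBSn n v ->
  (forall w1 w2, D d (dotp y v) w1 w2 = dotp2 (D d y) (D d v) w1 w2) /\
  (forall w1 w2, D (e + d)%N (star x v) w1 w2 = star2 (D e x) (D d v) w1 w2).
Proof.
move=> Hx Hy Hv; split=> w1 w2.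
  by case: (HD d) => _ _ Dmul _ _; apply: Dmul; [apply: inBSn_inBS Hy | apply: inBSn_inBS Hv].
rewrite (Delta_deconcat HD char0 (star_inBSn Hx Hv)).
by rewrite (Delta_deconcat HD char0 Hx) (Delta_deconcat HD char0 Hv) deconcat_star.
Qed.
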